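(* For all $n^+,n^-\ge0$, the operators $W^+|_{\hbar=1}$ and $W^-|_{\hbar=1}$, restricted to the space of polynomials in $p_k^\pm,q_k$ that are bihomogeneous of bidegree $(n^+,n^-)$, are self-adjoint with respect to the scalar product defined on monomials by $(p_\mu,p_\nu)=\delta_{\mu,\nu}\,\zeta(\mu)$, where for $\mu=(\kappa^+,\kappa^-,\lambda)$, $\lambda=(\ell_1,\ell_2,\dots)$, $$\zeta(\mu)=|\mathrm{Aut}(\kappa^+)|\,|\mathrm{Aut}(\kappa^-)|\,|\mathrm{Aut}(\lambda)|\prod_{j=1}^{\ell(\lambda)}\ell_j$$ and $|\mathrm{Aut}(\nu)|$ denotes the product of the factorials of the multiplicities of the parts of a partition $\nu$. (Equivalently, under $p_\mu\leftrightarrow C_\mu/|C_\mu|$, the scalar product $(C_\mu,C_\nu)=\delta_{\mu\nu}n^+!n^-!|C_\mu|$ on $A_{n^+,n^-}$.)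
   Context: $W^+|_{\hbar=1}=\sum_{i,j\ge1}\big(p_i^{\bar i}p_j^{+}\partial/\partial p_{i+j}^{\bar i}+p_{i+j}^{\bar i}\partial^2/\partial p_i^{\bar i}\partial p_j^{+}\big)+\sum_{i\ge1}\big(i\,p_{2i}^+\partial/\partial q_i+q_i\partial/\partial p_{2i}^+\big)$, where $\bar i$ is $+$ for $i$ even and $-$ for $i$ odd; $W^-$ is obtained from $W^+$ by exchanging $p_k^+\leftrightarrow p_k^-$ for all $k$. Bidegrees: $\mathrm{bdeg}\,p_{2k}^\pm=\mathrm{bdeg}\,q_k=(k,k)$, $\mathrm{bdeg}\,p_{2k+1}^+=(k+1,k)$, $\mathrm{bdeg}\,p_{2k+1}^-=(k,k+1)$. For a triple of partitions $\mu=(\kappa^+,\kappa^-,\lambda)$, $p_\mu=\prod p_{k_i^+}^+\prod p_{k_i^-}^-\prod q_{\ell_i}$. (The algebra $A_{n^+,n^-}$, $C_\mu$, $|C_\mu|$ are as follows: states on $N=N^+\sqcup N^-$ are partitions into singletons and $\{+,-\}$ pairs; transitions are ordered pairs of states; $C_\mu$ is the sum of transitions of type $\mu$, i.e. in the $S(N^+)\times S(N^-)$-orbit labelled by $\mu$, and $|C_\mu|=n^+!n^-!/\zeta(\mu)$ is their number.) *)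

From HB Require Import structures.
From mathcomp Require Import all_boot all_order all_algebra.
Set Implicit Arguments. Unset Strict Implicit. Unset Printing Implicit Defensive.
Import Order.TTheory GRing.Theory Num.Theory.

(* Variables of the polynomial ring: Pp k = p_k^+, Pm k = p_k^-, Q k = q_k
   (indices k >= 1). *)
Inductive var := Pp of nat | Pm of nat | Q of nat.

Definition var_code (x : var) : nat * nat :=
  match x with Pp k => (0, k) | Pm k => (1, k) | Q k => (2, k) end%N.
Definition var_decode (c : nat * nat) : var :=
  match c with (0, k) => Pp k | (1, k) => Pm k | (_, k) => Q k end%N.
Lemma var_codeK : cancel var_code var_decode. Proof. by case. Qed.
HB.instance Definition _ := Equality.copy var (can_type var_codeK).

Definition idx (x : var) : nat := match x with Pp k | Pm k | Q k => k end.
Definition valid_var (x : var) : bool := (0 < idx x)%N.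

Definition bdeg_var (x : var) : nat * nat :=
  match x with
  | Pp k => if odd k then (k./2.+1, k./2) else (k./2, k./2)
  | Pm k => if odd k then (k./2, k./2.+1) else (k./2, k./2)
  | Q k => (k, k)
  end.

(* A monomial is a finite multiset of variables, represented by a sequence
   (order irrelevant; two monomials are equal iff perm_eq). *)
Definition mono := seq var.
Definition bdeg (m : mono) : nat * nat :=
  (sumn [seq (bdeg_var x).1 | x <- m], sumn [seq (bdeg_var x).2 | x <- m]).

(* A polynomial with rational coefficients, as a formal finite sum of
   coefficient * monomial terms. *)
Definition wpoly := seq (rat * mono).

Local Open Scope ring_scope.

Definition scalep (a : rat) (P : wpoly) : wpoly := [seq (a * t.1, t.2) | t <- P].
Definition mulv (x : var) (P : wpoly) : wpoly := [seq (t.1, x :: t.2) | t <- P].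
Definition dv (x : var) (P : wpoly) : wpoly :=
  [seq (t.1 * (count_mem x t.2)%:R, rem x t.2) | t <- P].

(* p_k^s with sign s (true = +, false = -) *)
Definition pv (s : bool) (k : nat) : var := if s then Pp k else Pm k.

(* W^s |_{hbar=1} applied to a monomial; W true = W^+, W false = W^-
   (W^- is W^+ with p^+ <-> p^- exchanged).  The infinite sums over i, j >= 1
   are truncated at N = sum of indices of m, beyond which all terms vanish. *)
Definition Wmono (s : bool) (m : mono) : wpoly :=
  let N := sumn [seq idx x | x <- m] in
  let one : wpoly := [:: (1, m)] in
  let sg i := if odd i then ~~ s else s in
  let pbar i := pv (sg i) i in
  flatten [seq flatten [seq
       mulv (pbar i) (mulv (pv s j) (dv (pv (sg i) (i + j)%N) one))
    ++ mulv (pv (sg i) (i + j)%N) (dv (pbar i) (dv (pv s j) one))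
    | j <- iota 1 N] | i <- iota 1 N]
  ++ flatten [seq
       scalep i%:R (mulv (pv s (2 * i)%N) (dv (Q i) one))
    ++ mulv (Q i) (dv (pv s (2 * i)%N) one)
    | i <- iota 1 N].

Definition W (s : bool) (P : wpoly) : wpoly :=
  flatten [seq scalep t.1 (Wmono s t.2) | t <- P].

Definition zeta (m : mono) : nat :=
  (\prod_(x <- undup m) (count_mem x m)`! *
   \prod_(x <- m) (match x with Q l => l | _ => 1 end))%N.

Definition mono_sp (m1 m2 : mono) : rat :=
  if perm_eq m1 m2 then (zeta m1)%:R else 0.

Definition sp (P1 P2 : wpoly) : rat :=
  \sum_(a <- P1) \sum_(b <- P2) a.1 * b.1 * mono_sp a.2 b.2.

Definition bihom (np nm : nat) (P : wpoly) : bool :=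
  all (fun t => all valid_var t.2 && (bdeg t.2 == (np, nm))) P.

From mathcomp Require Import all_boot all_order all_algebra.
From mathcomp Require Import zify ring.
Import GRing.Theory.
Set Implicit Arguments. Unset Strict Implicit.

(* The scalar product (p_mu, p_nu) = delta_{mu,nu} zeta(mu) is the one for
   which multiplication by a variable x is adjoint to  w(x) d/dx, where the
   weight w(x) is l for x = q_l and 1 for x = p_k^+-.  This follows from the
   recursion  zeta(x m) = (mult_x(m) + 1) * w(x) * zeta(m).  Consequently
   multiplications by two variables commute under the scalar product, and the
   summands of W come in adjoint pairs:
     p_i p_j d/dp_{i+j}   <->   p_{i+j} d^2/dp_i dp_j,
     i p_{2i} d/dq_i      <->   q_i d/dp_{2i}.
   Since W is encoded with sums truncated at the total index of the monomial,
   we first show the truncation bound may be enlarged freely (the extra terms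
   differentiate with respect to absent variables), compare W on two
   monomials with a common bound, and conclude by bilinearity.  The
   adjointness holds on the whole polynomial space. *)

Local Open Scope ring_scope.

Definition var_weight (x : var) : nat := match x with Q l => l | _ => 1%N end.

Definition aut (m : mono) : nat := \prod_(x <- undup m) (count_mem x m)`!.

Lemma zetaE (m : mono) : zeta m = (aut m * \prod_(x <- m) var_weight x)%N.
Proof. by []. Qed.

Lemma aut_perm (m m' : mono) : perm_eq m m' -> aut m = aut m'.
Proof.
move=> pmm'; have count_eq := permP pmm'.
have undup_pmm' : perm_eq (undup m) (undup m').
  apply: uniq_perm; rewrite ?undup_uniq // => x.
  by rewrite !mem_undup (perm_mem pmm').
by rewrite /aut (perm_big _ undup_pmm'); apply: eq_bigr => x _; rewrite count_eq.
Qed.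

Lemma aut_cons (x : var) (m : mono) :
  aut (x :: m) = ((count_mem x m).+1 * aut m)%N.
Proof.
have others y : y != x -> ((x == y) + count_mem y m)%N = count_mem y m.
  by rewrite eq_sym => /negbTE ->.
rewrite /aut /=; case xm: (x \in m).
  rewrite !(bigD1_seq x) ?mem_undup ?undup_uniq //= eqxx add1n factS mulnA.
  by congr (_ * _)%N; apply: eq_bigr => y /others ->.
rewrite big_cons eqxx (count_memPn (negbT xm)).
congr (_ * _)%N; apply: eq_big_seq => y; rewrite mem_undup => ym; rewrite others //.
by apply: contraTneq ym => ->; rewrite xm.
Qed.

Lemma zeta_perm (m m' : mono) : perm_eq m m' -> zeta m = zeta m'.
Proof. by move=> pmm'; rewrite !zetaE (aut_perm pmm') (perm_big _ pmm'). Qed.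

Lemma zeta_cons (x : var) (m : mono) :
  zeta (x :: m) = ((count_mem x m).+1 * var_weight x * zeta m)%N.
Proof. by rewrite !zetaE aut_cons big_cons /=; ring. Qed.

Lemma mono_sp_perm (m1 m1' m2 : mono) :
  perm_eq m1 m1' -> mono_sp m1 m2 = mono_sp m1' m2.
Proof. by move=> p1; rewrite /mono_sp (permPl p1) (zeta_perm p1). Qed.

Lemma mono_sp_sym (m1 m2 : mono) : mono_sp m1 m2 = mono_sp m2 m1.
Proof. by rewrite /mono_sp perm_sym; case: ifP => // /zeta_perm ->. Qed.

Lemma mono_sp_cons (x : var) (m1 m2 : mono) :
  mono_sp (x :: m1) m2 =
  (var_weight x)%:R * (count_mem x m2)%:R * mono_sp m1 (rem x m2).
Proof.
rewrite /mono_sp; case xm2: (x \in m2); last first.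
  rewrite (count_memPn (negbT xm2)) mulr0 mul0r.
  by case: ifP => // /perm_mem p; rewrite -p mem_head in xm2.
have p_rem := perm_to_rem xm2.
rewrite (permPr p_rem) perm_cons; case: ifP => p12; last by rewrite mulr0.
have p_cons : perm_eq (x :: m1) m2 by rewrite (permPr p_rem) perm_cons.
by rewrite -(permP p_cons) zeta_cons /= eqxx add1n !natrM; ring.
Qed.

Lemma sp_sym (P1 P2 : wpoly) : sp P1 P2 = sp P2 P1.
Proof.
rewrite /sp exchange_big; apply: eq_bigr => b _; apply: eq_bigr => a _.
by rewrite mono_sp_sym (mulrC a.1).
Qed.

Lemma sp_cat (P1 P2 R : wpoly) : sp (P1 ++ P2) R = sp P1 R + sp P2 R.
Proof. by rewrite /sp big_cat. Qed.

Lemma sp_flatten (Ps : seq wpoly) (R : wpoly) :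
  sp (flatten Ps) R = \sum_(P <- Ps) sp P R.
Proof. by rewrite /sp big_flatten. Qed.

Lemma sp_scalep (c : rat) (P R : wpoly) : sp (scalep c P) R = c * sp P R.
Proof.
rewrite /sp big_map mulr_sumr; apply: eq_bigr => a _.
by rewrite mulr_sumr; apply: eq_bigr => b _ /=; ring.
Qed.

Lemma sp_mulv (x : var) (P R : wpoly) :
  sp (mulv x P) R = (var_weight x)%:R * sp P (dv x R).
Proof.
rewrite /sp big_map mulr_sumr; apply: eq_bigr => a _.
by rewrite big_map mulr_sumr; apply: eq_bigr => b _ /=; rewrite mono_sp_cons; ring.
Qed.

Lemma var_weight_pv (s : bool) (k : nat) : var_weight (pv s k) = 1%N.
Proof. by case: s. Qed.

Lemma idx_pv (s : bool) (k : nat) : idx (pv s k) = k.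
Proof. by case: s. Qed.

Lemma sp_dv_pv (s : bool) (k : nat) (P R : wpoly) :
  sp P (dv (pv s k) R) = sp (mulv (pv s k) P) R.
Proof. by rewrite sp_mulv var_weight_pv mul1r. Qed.

(* Monomials are multisets: multiplications commute under the scalar product. *)
Lemma sp_mulvC (x y : var) (P R : wpoly) :
  sp (mulv x (mulv y P)) R = sp (mulv y (mulv x P)) R.
Proof.
rewrite /sp /mulv !big_map; apply: eq_bigr => a _; apply: eq_bigr => b _ /=.
congr (_ * _); apply: mono_sp_perm.
by rewrite -[x :: y :: _]/([:: x] ++ [:: y] ++ a.2) perm_catCA.
Qed.

(* Polynomials all of whose coefficients vanish are orthogonal to everything;
   they arise when differentiating a monomial by an absent variable. *)
Definition null_poly (P : wpoly) : bool := all (fun t => t.1 == 0) P.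

Lemma sp_null (P R : wpoly) : null_poly P -> sp P R = 0.
Proof.
move=> P0; rewrite /sp big1_seq // => a /andP [_ aP].
by rewrite (eqP (allP P0 a aP)) big1 // => b _; rewrite !mul0r.
Qed.

Lemma null_mulv (x : var) (P : wpoly) : null_poly P -> null_poly (mulv x P).
Proof. by rewrite /null_poly all_map. Qed.

Lemma null_dv (x : var) (P : wpoly) : null_poly P -> null_poly (dv x P).
Proof. by rewrite /null_poly all_map; apply: sub_all => t /eqP /= ->; rewrite mul0r. Qed.

Lemma null_scalep (c : rat) (P : wpoly) : null_poly P -> null_poly (scalep c P).
Proof. by rewrite /null_poly all_map; apply: sub_all => t /eqP /= ->; rewrite mulr0. Qed.

Lemma dv_absent (x : var) (c : rat) (m : mono) :
  x \notin m -> null_poly (dv x [:: (c, m)]).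
Proof. by move=> /count_memPn xm; rewrite /null_poly /= xm mulr0. Qed.

Lemma large_idx_absent (x : var) (m : mono) :
  (sumn [seq idx y | y <- m] < idx x)%N -> x \notin m.
Proof.
elim: m => //= y m IH large; rewrite in_cons negb_or; apply/andP; split.
  by apply: contraTneq large => ->; lia.
by apply: IH; lia.
Qed.

Definition sgn (s : bool) (i : nat) : bool := if odd i then ~~ s else s.

Definition cut_term (s : bool) (i j : nat) (m : mono) : wpoly :=
  mulv (pv (sgn s i) i) (mulv (pv s j) (dv (pv (sgn s i) (i + j)) [:: (1, m)])).
Definition join_term (s : bool) (i j : nat) (m : mono) : wpoly :=
  mulv (pv (sgn s i) (i + j)) (dv (pv (sgn s i) i) (dv (pv s j) [:: (1, m)])).
Definition q_out_term (s : bool) (i : nat) (m : mono) : wpoly :=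
  scalep i%:R (mulv (pv s (2 * i)) (dv (Q i) [:: (1, m)])).
Definition q_in_term (s : bool) (i : nat) (m : mono) : wpoly :=
  mulv (Q i) (dv (pv s (2 * i)) [:: (1, m)]).

Definition Wmono_upto (s : bool) (M : nat) (m : mono) : wpoly :=
  flatten [seq flatten [seq cut_term s i j m ++ join_term s i j m
                       | j <- iota 1 M] | i <- iota 1 M]
  ++ flatten [seq q_out_term s i m ++ q_in_term s i m | i <- iota 1 M].

Lemma Wmono_uptoE (s : bool) (m : mono) :
  Wmono s m = Wmono_upto s (sumn [seq idx x | x <- m]) m.
Proof. by []. Qed.

Lemma sp_Wmono_upto (s : bool) (M : nat) (m : mono) (R : wpoly) :
  sp (Wmono_upto s M m) R =
    \sum_(i <- iota 1 M) \sum_(j <- iota 1 M)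
        (sp (cut_term s i j m) R + sp (join_term s i j m) R)
  + \sum_(i <- iota 1 M) (sp (q_out_term s i m) R + sp (q_in_term s i m) R).
Proof.
rewrite /Wmono_upto sp_cat !sp_flatten !big_map; congr (_ + _).
  apply: eq_bigr => i _; rewrite sp_flatten big_map.
  by apply: eq_bigr => j _; apply: sp_cat.
by apply: eq_bigr => i _; apply: sp_cat.
Qed.

Section VanishingTerms.
Variables (s : bool) (m : mono) (R : wpoly).
Let N := sumn [seq idx y | y <- m].

Lemma cut_term_large (i j : nat) : (N < i + j)%N -> sp (cut_term s i j m) R = 0.
Proof.
move=> large; apply/sp_null/null_mulv/null_mulv/dv_absent/large_idx_absent.
by rewrite idx_pv.
Qed.

Lemma join_term_large (i j : nat) :
  (N < i)%N || (N < j)%N -> sp (join_term s i j m) R = 0.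
Proof.
case/orP => large; apply/sp_null/null_mulv; last first.
  by apply/null_dv/dv_absent/large_idx_absent; rewrite idx_pv.
have absent : pv (sgn s i) i \notin m by apply: large_idx_absent; rewrite idx_pv.
by apply/dv_absent; apply: contra absent; apply: mem_rem.
Qed.

Lemma q_out_term_large (i : nat) : (N < i)%N -> sp (q_out_term s i m) R = 0.
Proof. by move=> large; apply/sp_null/null_scalep/null_mulv/dv_absent/large_idx_absent. Qed.

Lemma q_in_term_large (i : nat) : (N < i)%N -> sp (q_in_term s i m) R = 0.
Proof.
move=> large; apply/sp_null/null_mulv/dv_absent/large_idx_absent.
by rewrite idx_pv; lia.
Qed.

End VanishingTerms.

Lemma sum_iota_trunc (F : nat -> rat) (N M : nat) :
  (N <= M)%N -> (forall k, (N < k)%N -> F k = 0) ->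
  \sum_(k <- iota 1 M) F k = \sum_(k <- iota 1 N) F k.
Proof.
move=> NM F0; rewrite -(subnKC NM) iotaD big_cat /=.
rewrite [X in _ + X]big1_seq ?addr0 // => k /andP [_].
by rewrite mem_iota => /andP [Nk _]; apply: F0; lia.
Qed.

Lemma sp_Wmono_upto_large (s : bool) (M : nat) (m : mono) (R : wpoly) :
  (sumn [seq idx y | y <- m] <= M)%N ->
  sp (Wmono_upto s M m) R = sp (Wmono s m) R.
Proof.
move=> NM; rewrite Wmono_uptoE !sp_Wmono_upto; set N := sumn _.
congr (_ + _); last first.
  by apply: sum_iota_trunc => // i Ni; rewrite q_out_term_large ?q_in_term_large ?addr0.
rewrite (sum_iota_trunc NM); last first.
  move=> i Ni; apply: big1_seq => j _.
  by rewrite cut_term_large ?join_term_large ?Ni ?addr0 //; lia.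
apply: eq_bigr => i _; apply: sum_iota_trunc => // j Nj.
by rewrite cut_term_large ?join_term_large ?Nj ?orbT ?addr0 //; lia.
Qed.

Lemma cut_join_adjoint (s : bool) (i j : nat) (m1 m2 : mono) :
  sp (cut_term s i j m1) [:: (1, m2)] = sp (join_term s i j m2) [:: (1, m1)].
Proof.
rewrite /cut_term /join_term !sp_mulv !var_weight_pv !mul1r [RHS]sp_sym.
by rewrite !sp_dv_pv sp_mulvC.
Qed.

Lemma q_out_in_adjoint (s : bool) (i : nat) (m1 m2 : mono) :
  sp (q_out_term s i m1) [:: (1, m2)] = sp (q_in_term s i m2) [:: (1, m1)].
Proof.
by rewrite /q_out_term /q_in_term sp_scalep !sp_mulv var_weight_pv mul1r sp_sym.
Qed.

Lemma Wmono_adjoint (s : bool) (m1 m2 : mono) :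
  sp (Wmono s m1) [:: (1, m2)] = sp (Wmono s m2) [:: (1, m1)].
Proof.
set N1 := sumn [seq idx y | y <- m1]; set N2 := sumn [seq idx y | y <- m2].
rewrite -(@sp_Wmono_upto_large s (N1 + N2)) ?leq_addr //.
rewrite -(@sp_Wmono_upto_large s (N1 + N2) m2) ?leq_addl //.
rewrite !sp_Wmono_upto; congr (_ + _).
  apply: eq_bigr => i _; apply: eq_bigr => j _.
  by rewrite addrC cut_join_adjoint -cut_join_adjoint.
by apply: eq_bigr => i _; rewrite addrC q_out_in_adjoint -q_out_in_adjoint.
Qed.

Lemma sp_W_left (s : bool) (P R : wpoly) :
  sp (W s P) R = \sum_(t <- P) t.1 * sp (Wmono s t.2) R.
Proof.
by rewrite /W sp_flatten big_map; apply: eq_bigr => t _; apply: sp_scalep.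
Qed.

Lemma sp_right_monomials (P R : wpoly) :
  sp P R = \sum_(b <- R) b.1 * sp P [:: (1, b.2)].
Proof.
rewrite /sp exchange_big; apply: eq_bigr => b _; rewrite mulr_sumr.
by apply: eq_bigr => a _; rewrite big_seq1 /=; ring.
Qed.

Theorem proposition4p5 (np nm : nat) (s : bool) (P1 P2 : wpoly) :
  bihom np nm P1 -> bihom np nm P2 ->
  sp (W s P1) P2 = sp P1 (W s P2).
Proof.
move=> _ _; rewrite [RHS]sp_sym !sp_W_left.
under eq_bigr => t _ do rewrite sp_right_monomials mulr_sumr.
under [RHS]eq_bigr => b _ do rewrite sp_right_monomials mulr_sumr.
rewrite exchange_big; apply: eq_bigr => b _; apply: eq_bigr => t _.
by rewrite Wmono_adjoint; ring.
Qed.
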